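(* Let $M$ be a graded $R$-module. Then for every graded quasi-primary submodule $Q$ of $M$ satisfying the graded primeful property, $qp\text{-}V_M^g(Q)$ is an irreducible closed subset of $qp.Spec_g(M)$ with the quasi-Zariski topology.
   Context: $R=\bigoplus_{g\in G}R_g$ is a graded commutative ring with identity graded by a group $G$, $h(R)=\bigcup_g R_g$; $M$ is a graded $R$-module, $h(M)$ its homogeneous elements. $Gr(I)$ is the graded radical of a graded ideal $I$. $(K:_RM)=\{r: rM\subseteq K\}$. Graded prime submodule: proper graded $P$ with $rm\in P$ ($r\in h(R), m\in h(M)$) implying $m\in P$ or $r\in(P:_RM)$. $Gr_M(K)$: intersection of graded prime submodules containing $K$ ($M$ if none). Graded primeful property of $K$: for each graded prime $p\supseteq(K:_RM)$ there is a graded prime submodule $P\supseteq K$ with $(P:_RM)=p$. Graded quasi-primary submodule: proper graded $Q$ with $rm\in Q$ ($r\in h(R),m\in h(M)$) implying $r\in Gr((Q:_RM))$ or $m\in Gr_M(Q)$. $qp.Spec_g(M)$: graded quasi-primary submodules with the graded primeful property. $qp\text{-}V_M^g(K)=\{Q\in qp.Spec_g(M): Gr((Q:_RM))\supseteq Gr((K:_RM))\}$; the quasi-Zariski topology has closed sets exactly these. A subset $A$ of a topological space is irreducible if whenever $A\subseteq A_1\cup A_2$ with $A_1,A_2$ closed, then $A\subseteq A_1$ or $A\subseteq A_2$. *)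

From mathcomp Require Import all_boot all_order all_algebra.
Set Implicit Arguments. Unset Strict Implicit. Unset Printing Implicit Defensive.
Import GRing.Theory.
Local Open Scope ring_scope.

(* An (arbitrary, possibly infinite, possibly nonabelian) group, used as the
   grading group.  The carrier has decidable equality (needed to talk about
   finite sequences of distinct degrees). *)
Record grp := Grp {
  gcar :> eqType;
  gmul : gcar -> gcar -> gcar;
  gunit : gcar;
  ginv : gcar -> gcar;
  gmulA : forall x y z, gmul x (gmul y z) = gmul (gmul x y) z;
  gmul1 : forall x, gmul gunit x = x;
  gmulV : forall x, gmul (ginv x) x = gunit
}.

(* A G-grading of a commutative ring R, given by the projections
   rcomp g : R -> R onto the homogeneous components R_g = image (rcomp g).
   The axioms say exactly that R = (+)_g R_g (direct sum of additive
   subgroups) and R_g R_h \subseteq R_{gh}. *)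
Record ring_grading (R : comPzRingType) (G : grp) := RingGrading {
  rcomp : G -> R -> R;
  rcompD : forall g x y, rcomp g (x + y) = rcomp g x + rcomp g y;
  rcomp_id : forall g x, rcomp g (rcomp g x) = rcomp g x;
  rcomp_orth : forall g h x, g <> h -> rcomp g (rcomp h x) = 0;
  rcomp_fin : forall x, exists s : seq G,
      [/\ uniq s, x = \sum_(g <- s) rcomp g x
        & forall g, g \notin s -> rcomp g x = 0];
  rcompM : forall g h x y,
      rcomp (gmul g h) (rcomp g x * rcomp h y) = rcomp g x * rcomp h y
}.

(* A G-grading of an R-module M compatible with the grading of R:
   M = (+)_g M_g and R_g M_h \subseteq M_{gh}. *)
Record module_grading (R : comPzRingType) (G : grp) (gR : ring_grading R G)
    (M : lmodType R) := ModuleGrading {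
  mcomp : G -> M -> M;
  mcompD : forall g x y, mcomp g (x + y) = mcomp g x + mcomp g y;
  mcomp_id : forall g x, mcomp g (mcomp g x) = mcomp g x;
  mcomp_orth : forall g h x, g <> h -> mcomp g (mcomp h x) = 0;
  mcomp_fin : forall x, exists s : seq G,
      [/\ uniq s, x = \sum_(g <- s) mcomp g x
        & forall g, g \notin s -> mcomp g x = 0];
  mcompZ : forall g h r m,
      mcomp (gmul g h) (rcomp gR g r *: mcomp h m) = rcomp gR g r *: mcomp h m
}.

Section Graded.
Variables (R : comPzRingType) (G : grp) (gR : ring_grading R G)
  (M : lmodType R) (gM : module_grading gR M).

Definition subset_of {T : Type} (A B : T -> Prop) := forall x, A x -> B x.

Definition homR (r : R) := exists g, rcomp gR g r = r.
Definition homM (m : M) := exists g, mcomp gM g m = m.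

Definition is_ideal (I : R -> Prop) :=
  [/\ I 0, (forall x y, I x -> I y -> I (x + y))
    & (forall a x, I x -> I (a * x))].
Definition graded_ideal (I : R -> Prop) :=
  is_ideal I /\ forall x g, I x -> I (rcomp gR g x).

Definition graded_prime_ideal (p : R -> Prop) :=
  [/\ graded_ideal p, ~ p 1
    & forall a b, homR a -> homR b -> p (a * b) -> p a \/ p b].

Definition Gr (I : R -> Prop) : R -> Prop :=
  fun r => forall g, exists n : nat, (0 < n)%N /\ I (rcomp gR g r ^+ n).

Definition is_submodule (N : M -> Prop) :=
  [/\ N 0, (forall x y, N x -> N y -> N (x + y))
    & (forall (a : R) x, N x -> N (a *: x))].
Definition graded_submodule (N : M -> Prop) :=
  is_submodule N /\ forall x g, N x -> N (mcomp gM g x).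
Definition proper_sub (N : M -> Prop) := exists m, ~ N m.

Definition colon (K : M -> Prop) : R -> Prop := fun r => forall m, K (r *: m).

Definition graded_prime_submodule (P : M -> Prop) :=
  [/\ graded_submodule P, proper_sub P
    & forall r m, homR r -> homM m -> P (r *: m) -> P m \/ colon P r].

(* Gr_M(K): intersection of the graded prime submodules containing K
   (equal to M if there is none) *)
Definition GrM (K : M -> Prop) : M -> Prop :=
  fun m => forall P, graded_prime_submodule P -> subset_of K P -> P m.

Definition graded_primeful (K : M -> Prop) :=
  forall p, graded_prime_ideal p -> subset_of (colon K) p ->
    exists P, [/\ graded_prime_submodule P, subset_of K P
                & forall r, colon P r <-> p r].

Definition graded_quasi_primary (Q : M -> Prop) :=
  [/\ graded_submodule Q, proper_sub Q
    & forall r m, homR r -> homM m -> Q (r *: m) ->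
        Gr (colon Q) r \/ GrM Q m].

Definition qpSpec (Q : M -> Prop) := graded_quasi_primary Q /\ graded_primeful Q.

Definition qpV (K : M -> Prop) : (M -> Prop) -> Prop :=
  fun Q => qpSpec Q /\ subset_of (Gr (colon K)) (Gr (colon Q)).

(* closed sets of the quasi-Zariski topology: exactly the qp-V^g_M(K),
   K a graded submodule of M *)
Definition qp_closed (A : (M -> Prop) -> Prop) :=
  exists K, graded_submodule K /\ forall Q, A Q <-> qpV K Q.

Definition qp_irreducible (A : (M -> Prop) -> Prop) :=
  forall A1 A2, qp_closed A1 -> qp_closed A2 ->
    subset_of A (fun Q => A1 Q \/ A2 Q) ->
    subset_of A A1 \/ subset_of A A2.

End Graded.

From mathcomp Require Import all_boot all_order all_algebra.

Set Implicit Arguments.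
Unset Strict Implicit.

(* Q is a generic point of qp-V(Q): it lies in qp-V(Q), and every closed set
   qp-V(K) containing Q contains all of qp-V(Q), because the defining inclusion
   Gr((K :_R M)) ⊆ Gr((X :_R M)) is transitive.  A set with a generic point is
   irreducible. *)

Section QuasiZariski.
Variables (R : comPzRingType) (G : grp) (gR : ring_grading R G)
  (M : lmodType R) (gM : module_grading gR M).

Lemma qpV_qpSpec (K : M -> Prop) : subset_of (qpV gM K) (qpSpec gM).
Proof. by move=> X []. Qed.

Lemma qpV_closed (K : M -> Prop) :
  graded_submodule gM K -> qp_closed gM (qpV gM K).
Proof. by exists K. Qed.

Lemma qpV_self (Q : M -> Prop) : qpSpec gM Q -> qpV gM Q Q.
Proof. by split. Qed.

Lemma qpV_trans (K Q : M -> Prop) :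
  qpV gM K Q -> subset_of (qpV gM Q) (qpV gM K).
Proof. by move=> [_ GrKQ] X [specX GrQX]; split=> // r /GrKQ /GrQX. Qed.

Lemma qp_closed_qpV_sub (A : (M -> Prop) -> Prop) (Q : M -> Prop) :
  qp_closed gM A -> A Q -> subset_of (qpV gM Q) A.
Proof.
by move=> [K [_ defA]] /defA AQ X /(qpV_trans AQ) /defA.
Qed.

Lemma generic_point_qp_irreducible (A : (M -> Prop) -> Prop) (Q : M -> Prop) :
  A Q -> (forall A', qp_closed gM A' -> A' Q -> subset_of A A') ->
  qp_irreducible gM A.
Proof.
move=> AQ genericQ A1 A2 closedA1 closedA2 sub_A_A12.
by case: (sub_A_A12 Q AQ) => [/(genericQ _ closedA1)|/(genericQ _ closedA2)];
  [left | right].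
Qed.

Lemma qpV_qp_irreducible (Q : M -> Prop) :
  qpSpec gM Q -> qp_irreducible gM (qpV gM Q).
Proof.
move=> specQ.
exact: generic_point_qp_irreducible (qpV_self specQ) (@qp_closed_qpV_sub^~ Q).
Qed.

End QuasiZariski.

Theorem theorem4p6 (R : comPzRingType) (G : grp) (gR : ring_grading R G)
  (M : lmodType R) (gM : module_grading gR M) (Q : M -> Prop) :
  graded_quasi_primary gM Q -> graded_primeful gM Q ->
  subset_of (qpV gM Q) (qpSpec gM) /\
  qp_closed gM (qpV gM Q) /\ qp_irreducible gM (qpV gM Q).
Proof.
move=> qprimQ primefulQ; split; first exact: qpV_qpSpec.
split; first by apply: qpV_closed; case: qprimQ.
exact: qpV_qp_irreducible.
Qed.
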